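(* Let $A$ be a $\boldsymbol{\mathit{ba}\ell}$-algebra and $I$ an $\ell$-ideal of $A$. Then the archimedean hull of $I$ is $$[\![I]\!]=\{x\in A\mid (n|x|-1)^+\in I \text{ for all integers } n\ge 1\}.$$
   Context: A $\boldsymbol{\mathit{ba}\ell}$-algebra is a commutative unital lattice-ordered algebra $A$ over $\mathbb R$ that is bounded (for every $a\in A$ there is an integer $n\ge1$ with $a\le n\cdot1$) and archimedean (if $na\le b$ for all $n\ge1$ then $a\le0$); a real $r$ is identified with $r\cdot 1$. For $a\in A$: $a^+=a\vee0$, $a^-=(-a)\vee0$, $|a|=a\vee(-a)$. An $\ell$-ideal is a ring ideal $I$ such that $|a|\le|b|$ and $b\in I$ imply $a\in I$; it is archimedean if $A/I$ is archimedean. For $S\subseteq A$, the archimedean hull $[\![S]\!]$ is the intersection of all archimedean $\ell$-ideals of $A$ containing $S$. *)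

From HB Require Import structures.
From mathcomp Require Import all_boot all_order all_algebra.
From mathcomp Require Import reals.
Set Implicit Arguments. Unset Strict Implicit. Unset Printing Implicit Defensive.
Import Order.TTheory GRing.Theory Num.Theory.
Local Open Scope ring_scope.

Section BalDefs.
Variables (R : realType) (A : comAlgType R).
Variables (le : A -> A -> Prop) (join : A -> A -> A).

Definition lpos (a : A) : A := join a 0.
Definition lneg (a : A) : A := join (- a) 0.
Definition labs (a : A) : A := join a (- a).

Record ba_ell_algebra : Prop := BaEll {
  le_refl : forall x, le x x;
  le_antisym : forall x y, le x y -> le y x -> x = y;
  le_trans : forall x y z, le x y -> le y z -> le x z;
  (* join is the least upper bound (lattice; meets then exist since
     x /\ y = - ((-x) \/ (-y)) in a lattice-ordered group) *)
  join_ub_l : forall x y, le x (join x y);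
  join_ub_r : forall x y, le y (join x y);
  join_lub : forall x y z, le x z -> le y z -> le (join x y) z;
  le_add : forall x y z, le x y -> le (x + z) (y + z);
  le_mul : forall x y, le 0 x -> le 0 y -> le 0 (x * y);
  le_scale : forall (r : R) x, 0 <= r -> le 0 x -> le 0 (r *: x);
  bounded : forall a, exists n : nat, (1 <= n)%N /\ le a (n%:R);
  archimedean : forall a b, (forall n : nat, (1 <= n)%N -> le (a *+ n) b) ->
                le a 0
}.

Definition ring_ideal (I : A -> Prop) : Prop :=
  [/\ I 0, (forall x y, I x -> I y -> I (x + y)), (forall x, I x -> I (- x))
    & (forall a x, I x -> I (a * x))].

Definition ell_ideal (I : A -> Prop) : Prop :=
  ring_ideal I /\ (forall a b, le (labs a) (labs b) -> I b -> I a).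

(* order of the quotient A/I: [x] <= [y] iff x <= y + i for some i in I
   (the positive cone of A/I is the image of that of A) *)
Definition quot_le (I : A -> Prop) (x y : A) : Prop :=
  exists i, I i /\ le x (y + i).

Definition arch_ideal (I : A -> Prop) : Prop :=
  forall x y, (forall n : nat, (1 <= n)%N -> quot_le I (x *+ n) y) ->
    quot_le I x 0.

Definition arch_hull (S : A -> Prop) (x : A) : Prop :=
  forall J : A -> Prop, ell_ideal J -> arch_ideal J ->
    (forall s, S s -> J s) -> J x.

End BalDefs.

From Pilot Require Import Defs.
From HB Require Import structures.
From mathcomp Require Import all_boot all_order all_algebra.
From mathcomp Require Import reals ring.
Set Implicit Arguments.
Unset Strict Implicit.
Unset Printing Implicit Defensive.
Import Order.TTheory GRing.Theory Num.Theory.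
Local Open Scope ring_scope.

(* Write H(I) for the right-hand side ([cutoff_set join I] below).  The proof has
   two halves:
   - H(I) is contained in every archimedean l-ideal K containing I: in A/K
     we have n|x| <= 1 for every n, since n|x| - 1 <= (n|x| - 1)^+ \in K;
     archimedeanity of A/K gives |x| <= i for some i \in K, so x \in K.
   - H(I) is itself an archimedean l-ideal containing I, hence contains
     [[I]].  Closure under sums uses (n|x+y| - 1)^+ <= (2n|x| - 1)^+ +
     (2n|y| - 1)^+, closure under products uses |a x| <= m|x| for some m
     (boundedness of |a|), and archimedeanity uses boundedness of the
     right-hand side y of the hypothesis n x <= y + i_n. *)

Section BaEllAlgebra.
Variables (R : realType) (A : comAlgType R).
Variables (le : A -> A -> Prop) (join : A -> A -> A).
Hypothesis HA : ba_ell_algebra le join.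

Local Notation "x ⊑ y" := (le x y) (at level 70, no associativity).
Local Notation "x ^+'" := (lpos join x) (at level 2, format "x ^+'").
Local Notation "`| x |'" := (labs join x) (format "`| x |'").

Lemma le_refl x : x ⊑ x.
Proof. exact: (Defs.le_refl HA). Qed.

Lemma le_trans x y z : x ⊑ y -> y ⊑ z -> x ⊑ z.
Proof. exact: (Defs.le_trans HA). Qed.

Lemma lerD x y u v : x ⊑ y -> u ⊑ v -> x + u ⊑ y + v.
Proof.
move=> le_xy le_uv; apply: (le_trans (y := y + u)).
  exact: (Defs.le_add HA).
by rewrite (addrC y u) (addrC y v); apply: (Defs.le_add HA).
Qed.

Lemma subr_ge0_of_le x y : x ⊑ y -> 0 ⊑ y - x.
Proof. by move=> h; rewrite -(subrr x); apply: (Defs.le_add HA). Qed.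

Lemma le_of_subr_ge0 x y : 0 ⊑ y - x -> x ⊑ y.
Proof. by move=> h; have := Defs.le_add HA x h; rewrite add0r subrK. Qed.

Lemma lerN x y : x ⊑ y -> - y ⊑ - x.
Proof.
by move=> /subr_ge0_of_le h; apply: le_of_subr_ge0; rewrite opprK addrC.
Qed.

Lemma addr_ge0 x y : 0 ⊑ x -> 0 ⊑ y -> 0 ⊑ x + y.
Proof. by move=> hx hy; rewrite -(addr0 0); apply: lerD. Qed.

Lemma lerMn x y n : x ⊑ y -> x *+ n ⊑ y *+ n.
Proof.
move=> h; elim: n => [|n IH]; first by rewrite !mulr0n; apply: le_refl.
by rewrite !mulrS; apply: lerD.
Qed.

Lemma mulrn_ge0 x n : 0 ⊑ x -> 0 ⊑ x *+ n.
Proof. by move=> h; rewrite -(mul0rn _ n); apply: lerMn. Qed.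

(* Positivity can be divided by a positive integer: scale by n^-1. *)
Lemma mulrn_ge0_cancel u n : (0 < n)%N -> 0 ⊑ u *+ n -> 0 ⊑ u.
Proof.
move=> n_gt0 h; have n_neq0 : (n%:R : R) != 0 by rewrite pnatr_eq0 -lt0n.
have -> : u = (n%:R : R)^-1 *: (u *+ n).
  by rewrite -scaler_nat scalerA mulVf ?scale1r.
by apply: (Defs.le_scale HA) => //; rewrite invr_ge0.
Qed.

Lemma lerMn_cancel z v n : (0 < n)%N -> z *+ n ⊑ v *+ n -> z ⊑ v.
Proof.
move=> n_gt0 /subr_ge0_of_le h; apply: le_of_subr_ge0.
by apply: (mulrn_ge0_cancel n_gt0); rewrite mulrnBl.
Qed.

(* If n z <= w with w >= 0 then z <= w, since w <= n w. *)
Lemma le_of_mulrn_le z w n : (0 < n)%N -> z *+ n ⊑ w -> 0 ⊑ w -> z ⊑ w.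
Proof.
case: n => [//|n] _ h w_ge0; apply: le_of_subr_ge0.
apply: (mulrn_ge0_cancel (n := n.+1)) => //.
have -> : (w - z) *+ n.+1 = (w - z *+ n.+1) + w *+ n by ring.
by apply: addr_ge0; [exact: subr_ge0_of_le | apply: mulrn_ge0].
Qed.

(* The unit is positive: boundedness of -1 gives 0 <= (n+1) 1. *)
Lemma ler01 : 0 ⊑ 1.
Proof.
have [n [_ hn]] := Defs.bounded HA (-1).
apply: (mulrn_ge0_cancel (n := n.+1)) => //.
by move/subr_ge0_of_le: hn; rewrite opprK mulrSr.
Qed.

Lemma ler1Sn n : 1 ⊑ n.+1%:R.
Proof.
by apply: le_of_subr_ge0; rewrite mulrSr addrK; apply: mulrn_ge0 ler01.
Qed.

Lemma lpos_ge0 a : 0 ⊑ a^+'.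
Proof. exact: (Defs.join_ub_r HA). Qed.

Lemma lpos_ge a : a ⊑ a^+'.
Proof. exact: (Defs.join_ub_l HA). Qed.

Lemma lpos_le a w : a ⊑ w -> 0 ⊑ w -> a^+' ⊑ w.
Proof. exact: (Defs.join_lub HA). Qed.

(* n z <= w with w >= 0 implies n z^+ <= w: apply [lpos_le] to w / n. *)
Lemma lpos_mulrn_le z w n : (0 < n)%N -> z *+ n ⊑ w -> 0 ⊑ w ->
  z^+' *+ n ⊑ w.
Proof.
move=> n_gt0 h w_ge0; set v := (n%:R : R)^-1 *: w.
have vnE : v *+ n = w.
  by rewrite /v -scaler_nat scalerA mulfV ?scale1r // pnatr_eq0 -lt0n.
rewrite -vnE; apply: lerMn; apply: lpos_le.
  by apply: (lerMn_cancel n_gt0); rewrite vnE.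
by apply: (mulrn_ge0_cancel n_gt0); rewrite vnE.
Qed.

Lemma labs_ge a : a ⊑ `|a|'.
Proof. exact: (Defs.join_ub_l HA). Qed.

Lemma labs_geN a : - a ⊑ `|a|'.
Proof. exact: (Defs.join_ub_r HA). Qed.

Lemma labs_le a w : a ⊑ w -> - a ⊑ w -> `|a|' ⊑ w.
Proof. exact: (Defs.join_lub HA). Qed.

Lemma labs_ge0 x : 0 ⊑ `|x|'.
Proof.
apply: (mulrn_ge0_cancel (n := 2)) => //; rewrite mulr2n -(subrr x).
exact: lerD (labs_ge x) (labs_geN x).
Qed.

Lemma labs_le_ge0 a : 0 ⊑ a -> `|a|' ⊑ a.
Proof.
move=> a_ge0; apply: labs_le; first exact: le_refl.
by apply: (le_trans (y := 0) _ a_ge0); rewrite -oppr0; apply: lerN.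
Qed.

Lemma labs_add x y : `|x + y|' ⊑ `|x|' + `|y|'.
Proof.
apply: labs_le; first exact: lerD (labs_ge x) (labs_ge y).
by rewrite opprD; apply: lerD; apply: labs_geN.
Qed.

(* Boundedness makes multiplication by a fixed a dominated by a multiple of
   |x|: with a = p - q, x = P - Q (p, q, P, Q >= 0) and p + q <= M we get
   |a x| <= (p + q)(P + Q) <= M (P + Q) <= 3M |x|. *)
Lemma labs_mul_bound a x : exists m : nat, `|a * x|' ⊑ `|x|' *+ m.
Proof.
set p := `|a|'; set q := `|a|' - a; set P := `|x|'; set Q := `|x|' - x.
have p_ge0 : 0 ⊑ p by apply: labs_ge0.
have q_ge0 : 0 ⊑ q by apply/subr_ge0_of_le/labs_ge.
have P_ge0 : 0 ⊑ P by apply: labs_ge0.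
have Q_ge0 : 0 ⊑ Q by apply/subr_ge0_of_le/labs_ge.
have mul_ge0 := Defs.le_mul HA.
have [M [_ hM]] := Defs.bounded HA (p + q).
exists (3 * M)%N.
have axE : a * x = (p - q) * (P - Q) by rewrite /p /q /P /Q; ring.
apply: (le_trans (y := (p + q) * (P + Q))).
  rewrite axE; apply: labs_le; apply: le_of_subr_ge0.
    have -> : (p + q) * (P + Q) - (p - q) * (P - Q) = (p * Q + q * P) *+ 2
      by ring.
    by apply/mulrn_ge0/addr_ge0; apply: mul_ge0.
  have -> : (p + q) * (P + Q) - - ((p - q) * (P - Q)) = (p * P + q * Q) *+ 2
    by ring.
  by apply/mulrn_ge0/addr_ge0; apply: mul_ge0.
apply: (le_trans (y := M%:R * (P + Q))).
  apply: le_of_subr_ge0; rewrite -mulrBl; apply: mul_ge0; last exact: addr_ge0.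
  by move/subr_ge0_of_le: hM.
rewrite mulr_natl mulrnA; apply: lerMn; apply: le_of_subr_ge0.
have -> : P *+ 3 - (P + Q) = P - (- x) by rewrite /P /Q; ring.
by apply/subr_ge0_of_le/labs_geN.
Qed.

Lemma ell_ideal_dominated K a b :
  ell_ideal le join K -> `|a|' ⊑ b -> K b -> K a.
Proof.
move=> [_ solid] le_ab Kb; apply: (solid a b) => //.
exact: le_trans le_ab (labs_ge b).
Qed.

Lemma ell_ideal_lpos K c b :
  ell_ideal le join K -> c ⊑ b -> 0 ⊑ b -> K b -> K c^+'.
Proof.
move=> HK le_cb b_ge0; apply: (ell_ideal_dominated HK).
exact: le_trans (labs_le_ge0 (lpos_ge0 c)) (lpos_le le_cb b_ge0).
Qed.

Section CutoffSet.
Variable I : A -> Prop.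
Hypothesis HI : ell_ideal le join I.

Definition cutoff_set x : Prop :=
  forall n : nat, (1 <= n)%N -> I ((`|x|' *+ n - 1)^+').

Lemma ideal_add x y : I x -> I y -> I (x + y).
Proof. by case: HI => -[_ addI _ _] _; apply: addI. Qed.

Lemma ideal_mulrn x n : I x -> I (x *+ n).
Proof. by case: HI => -[_ _ _ mulI] _ Ix; rewrite -mulr_natl; apply: mulI. Qed.

Lemma ideal_labs x : I x -> I `|x|'.
Proof.
by case: HI => _ solid; apply: solid; apply: labs_le_ge0 (labs_ge0 x).
Qed.

(* For s in I, (n|s| - 1)^+ <= n|s| lies in I. *)
Lemma ideal_sub_cutoff s : I s -> cutoff_set s.
Proof.
move=> Is n _; apply: (ell_ideal_lpos HI _ _ (ideal_mulrn n (ideal_labs Is))).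
  by apply: le_of_subr_ge0; rewrite opprB addrC subrK; apply: ler01.
exact/mulrn_ge0/labs_ge0.
Qed.

Lemma cutoff0 : cutoff_set 0.
Proof. by apply: ideal_sub_cutoff; case: HI => -[]. Qed.

Lemma cutoff_solid a b : `|a|' ⊑ `|b|' -> cutoff_set b -> cutoff_set a.
Proof.
move=> le_ab Jb n n_ge1; apply: (ell_ideal_lpos HI _ (lpos_ge0 _) (Jb n n_ge1)).
by apply: le_trans _ (lpos_ge _); apply/(Defs.le_add HA)/lerMn.
Qed.

Lemma cutoffN x : cutoff_set x -> cutoff_set (- x).
Proof.
apply: cutoff_solid; apply: labs_le; first exact: labs_geN.
by rewrite opprK; apply: labs_ge.
Qed.

(* (n|x+y| - 1)^+ <= (2n|x| - 1)^+ + (2n|y| - 1)^+, because twice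
   n|x| + n|y| - 1 is the sum of 2n|x| - 1 and 2n|y| - 1. *)
Lemma cutoffD x y : cutoff_set x -> cutoff_set y -> cutoff_set (x + y).
Proof.
move=> Jx Jy n n_ge1; have n2_ge1 : (1 <= n * 2)%N by rewrite muln_gt0 n_ge1.
set a := `|x|' *+ n; set b := `|y|' *+ n.
set P := (a *+ 2 - 1)^+' + (b *+ 2 - 1)^+'.
have IP : I P by apply: ideal_add; rewrite -mulrnA; [apply: Jx | apply: Jy].
have P_ge0 : 0 ⊑ P by apply: addr_ge0; apply: lpos_ge0.
apply: (ell_ideal_lpos HI _ P_ge0 IP); apply: (le_trans (y := a + b - 1)).
  by apply: (Defs.le_add HA); rewrite -mulrnDl; apply/lerMn/labs_add.
apply: (le_of_mulrn_le (n := 2)) => //.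
have -> : (a + b - 1) *+ 2 = (a *+ 2 - 1) + (b *+ 2 - 1) by ring.
by apply: lerD; apply: lpos_ge.
Qed.

Lemma cutoffMn x m : cutoff_set x -> cutoff_set (x *+ m).
Proof.
move=> Jx; elim: m => [|m IH]; first by rewrite mulr0n; apply: cutoff0.
by rewrite mulrS; apply: cutoffD.
Qed.

Lemma cutoffM a x : cutoff_set x -> cutoff_set (a * x).
Proof.
move=> Jx; have [m le_axm] := labs_mul_bound a x.
apply: (cutoff_solid (b := `|x|' *+ m)).
  exact: le_trans le_axm (labs_ge _).
by apply: cutoffMn; apply: cutoff_solid Jx; apply: labs_le_ge0 (labs_ge0 x).
Qed.

Lemma cutoff_ell_ideal : ell_ideal le join cutoff_set.
Proof.
split; last exact: cutoff_solid.
by split; [exact: cutoff0 | exact: cutoffD | exact: cutoffN | exact: cutoffM].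
Qed.

(* If n x <= y + i_n with i_n in H(I) for every n, then x^+ lies in H(I),
   witnessing x <= 0 + x^+ in A/H(I).  Indeed, with y <= m and n = 2km,
   n x^+ <= m + |i_n|, whence 2m (k x^+ - 1) <= |i_n| - m <= (|i_n| - 1)^+,
   which is in I because i_n lies in H(I). *)
Lemma cutoff_arch_ideal : arch_ideal le cutoff_set.
Proof.
move=> x y hyp; have [[|M] [//= _ le_yM]] := Defs.bounded HA y.
set m := M.+1; exists x^+'; split; last by rewrite add0r; apply: lpos_ge.
move=> k k_ge1; set n := (k * (m * 2))%N.
have n_ge1 : (1 <= n)%N by rewrite /n !muln_gt0 k_ge1.
have [i [Ji le_xi]] := hyp n n_ge1.
set W := m%:R + `|i|'.
have W_ge0 : 0 ⊑ W.
  by apply: addr_ge0; [apply: mulrn_ge0 ler01 | apply: labs_ge0].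
have le_posW : x^+' *+ n ⊑ W.
  apply: lpos_mulrn_le => //; apply: le_trans le_xi _.
  exact: lerD le_yM (labs_ge i).
apply: (ell_ideal_lpos HI _ (lpos_ge0 _) (Ji 1%N isT)).
apply: (le_trans (y := x^+' *+ k - 1)).
  by apply/(Defs.le_add HA)/lerMn/labs_le_ge0/lpos_ge0.
apply: (le_of_mulrn_le (n := m * 2)); [by [] | | exact: lpos_ge0].
rewrite mulrnBl -mulrnA; apply: (le_trans (y := W - 1 *+ (m * 2))).
  exact: (Defs.le_add HA).
have -> : W - 1 *+ (m * 2) = `|i|' - m%:R by rewrite /W; ring.
apply: (le_trans (y := `|i|' *+ 1 - 1)); last exact: lpos_ge.
by rewrite mulr1n; apply: lerD; [apply: le_refl | apply/lerN/ler1Sn].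
Qed.

(* H(I) is below every archimedean l-ideal K containing I: in A/K one has
   n|x| <= 1 for all n, so |x| <= i for some i in K. *)
Lemma cutoff_sub_arch_ideal K x :
  ell_ideal le join K -> arch_ideal le K -> (forall s, I s -> K s) ->
  cutoff_set x -> K x.
Proof.
move=> HK archK IK Jx.
have [|i [Ki le_xi]] := archK `|x|' 1.
  move=> n n_ge1; exists ((`|x|' *+ n - 1)^+'); split; first exact/IK/Jx.
  by have := Defs.le_add HA 1 (lpos_ge (`|x|' *+ n - 1)); rewrite subrK addrC.
by apply: (ell_ideal_dominated HK _ Ki); rewrite -[i]add0r.
Qed.

End CutoffSet.
End BaEllAlgebra.

Theorem mainTheorem4 (R : realType) (A : comAlgType R)
  (le : A -> A -> Prop) (join : A -> A -> A)
  (HA : ba_ell_algebra le join) (I : A -> Prop) (HI : ell_ideal le join I) :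
  forall x : A,
    arch_hull le join I x <->
    (forall n : nat, (1 <= n)%N -> I (lpos join (labs join x *+ n - 1))).
Proof.
move=> x; split.
-
  move=> hull_x; apply: (hull_x (cutoff_set join I)).
  + exact: (cutoff_ell_ideal HA HI).
  + exact: (cutoff_arch_ideal HA HI).
  + exact: (ideal_sub_cutoff HA HI).
-
  move=> Jx K HK archK IK.
  exact: (cutoff_sub_arch_ideal HA HK archK IK Jx).
Qed.
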